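(* Let $f:[0,\infty)\to[0,\infty)$ be continuous and satisfy $f(f(x))=x\,f(x)$ for all $x\ge 0$. Then either $f(x)=0$ for all $x\ge0$, or $f(0)=0$, $f(1)=1$ and $f$ is strictly increasing on $[0,\infty)$. *)

From Stdlib Require Import Reals.
Open Scope R_scope.

Definition continuous_on_nonneg (f : R -> R) : Prop :=
  forall x, 0 <= x -> forall eps, 0 < eps ->
    exists delta, 0 < delta /\
      forall y, 0 <= y -> Rabs (y - x) < delta -> Rabs (f y - f x) < eps.

(** From [f (f x) = x f x]: [f 0 = 0], and [f] is injective wherever it does
    not vanish, since [f x = f y <> 0] forces [x f x = y f y].  If [f a > 0],
    the intermediate value theorem puts every [v] in [(0, f a]] in the image,
    so [f v = z v > 0] for a preimage [z > 0].  A zero [f b = 0] with [b > 0]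
    would then make some small value [f p / 2] be attained on both sides of
    [p], contradicting injectivity; hence [f > 0] on [(0, +oo)], so [f] is
    injective there, [f 1 = 1] from [f (f 1) = f 1], and a decrease
    [f y <= f x] with [x < y] would give [f y] a second preimage in [[0, x]]. *)

From Stdlib Require Import Reals Lra Classical.
Open Scope R_scope.

Lemma Rabs_Rmax0_le x y : Rabs (Rmax 0 y - Rmax 0 x) <= Rabs (y - x).
Proof.
  unfold Rmax; destruct (Rle_dec 0 y), (Rle_dec 0 x);
    unfold Rabs; repeat destruct Rcase_abs; lra.
Qed.

Lemma continuity_comp_Rmax0 f :
  continuous_on_nonneg f -> continuity (fun x => f (Rmax 0 x)).
Proof.
  intros Hc x eps Heps; simpl; unfold R_dist.
  destruct (Hc (Rmax 0 x) (Rmax_l 0 x) eps Heps) as [d [Hd Hclose]].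
  exists d; split; [exact Hd |].
  intros y [_ Hy]; apply Hclose; [apply Rmax_l |].
  eapply Rle_lt_trans; [apply Rabs_Rmax0_le | exact Hy].
Qed.

Lemma continuous_on_nonneg_IVT f a b v :
  continuous_on_nonneg f -> 0 <= a -> a <= b ->
  (f a - v) * (f b - v) <= 0 -> exists z, a <= z <= b /\ f z = v.
Proof.
  intros Hc Ha Hab Hsign.
  set (h := fun x => f (Rmax 0 x) - v).
  assert (Hh : continuity h).
  { apply continuity_minus; [now apply continuity_comp_Rmax0 |].
    apply continuity_const; now intros ? ?. }
  assert (Eh : forall x, 0 <= x -> h x = f x - v).
  { intros x Hx; unfold h; now rewrite Rmax_right. }
  rewrite <- (Eh a Ha), <- (Eh b ltac:(lra)) in Hsign.
  destruct (IVT_cor h a b Hh Hab Hsign) as [z [Hz Hhz]].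
  exists z; split; [exact Hz |].
  rewrite Eh in Hhz; lra.
Qed.

Section FixedPointEquation.

Variable f : R -> R.
Hypothesis Hmaps : forall x, 0 <= x -> 0 <= f x.
Hypothesis Hcont : continuous_on_nonneg f.
Hypothesis Hfe : forall x, 0 <= x -> f (f x) = x * f x.

Lemma f0_eq0 : f 0 = 0.
Proof.
  assert (Hc : 0 <= f 0) by (apply Hmaps; lra).
  assert (Hfc : f (f 0) = 0) by (rewrite Hfe; lra).
  assert (H := Hfe (f 0) Hc).
  rewrite Hfc in H; lra.
Qed.

Lemma f_inj_nonzero x y : 0 <= x -> 0 <= y ->
  f x = f y -> f x <> 0 -> x = y.
Proof.
  intros Hx Hy Exy Hnz.
  assert (Ex := Hfe x Hx); assert (Ey := Hfe y Hy).
  rewrite Exy in Ex, Hnz; rewrite Ex in Ey.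
  now apply (Rmult_eq_reg_r (f y)).
Qed.

Lemma f_ivt_from0 x v : 0 <= x -> 0 <= v <= f x ->
  exists z, 0 <= z <= x /\ f z = v.
Proof.
  intros Hx Hv; apply continuous_on_nonneg_IVT; try lra; auto.
  rewrite f0_eq0; nra.
Qed.

Lemma f_gt0_below a v : 0 <= a -> 0 < v <= f a -> 0 < f v.
Proof.
  intros Ha Hv.
  destruct (f_ivt_from0 a v Ha ltac:(lra)) as [z [Hz Hfz]].
  assert (Hz0 : z <> 0) by (intros ->; rewrite f0_eq0 in Hfz; lra).
  rewrite <- Hfz, Hfe, Hfz by lra; nra.
Qed.

Lemma f_gt0 a b : 0 <= a -> 0 < f a -> 0 < b -> 0 < f b.
Proof.
  intros Ha Hfa Hb.
  destruct (Hmaps b ltac:(lra)) as [| Hfb]; [assumption | exfalso].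
  set (p := Rmin (f a) b / 2).
  assert (Hp : 0 < p < b /\ p <= f a)
    by (unfold p, Rmin; destruct Rle_dec; lra).
  assert (Hfp : 0 < f p) by (apply (f_gt0_below a); lra).
  destruct (f_ivt_from0 p (f p / 2)) as [x1 [Hx1 E1]]; [lra | lra |].
  destruct (continuous_on_nonneg_IVT f p b (f p / 2)) as [x2 [Hx2 E2]];
    try lra; auto.
  { rewrite <- Hfb; nra. }
  assert (x1 = x2) by (apply f_inj_nonzero; lra).
  subst x2; assert (x1 = p) by lra; subst x1; lra.
Qed.

Section Positive.

Hypothesis Hpos : forall b, 0 < b -> 0 < f b.

Lemma f1_eq1 : f 1 = 1.
Proof.
  assert (H1 := Hpos 1 ltac:(lra)).
  assert (E := Hfe 1 ltac:(lra)); rewrite Rmult_1_l in E.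
  apply f_inj_nonzero; lra.
Qed.

Lemma f_strictly_increasing x y : 0 <= x -> x < y -> f x < f y.
Proof.
  intros Hx Hxy.
  destruct (Rlt_or_le (f x) (f y)) as [| Hle]; [assumption | exfalso].
  assert (Hy := Hpos y ltac:(lra)).
  destruct (f_ivt_from0 x (f y)) as [z [Hz Ez]]; [lra | lra |].
  assert (z = y) by (apply f_inj_nonzero; lra).
  lra.
Qed.

End Positive.

End FixedPointEquation.

Theorem proposition1 (f : R -> R)
  (Hmaps : forall x, 0 <= x -> 0 <= f x)
  (Hcont : continuous_on_nonneg f)
  (Hfe : forall x, 0 <= x -> f (f x) = x * f x) :
  (forall x, 0 <= x -> f x = 0) \/
  (f 0 = 0 /\ f 1 = 1 /\
   forall x y, 0 <= x -> x < y -> f x < f y).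
Proof.
  destruct (classic (forall x, 0 <= x -> f x = 0)) as [Hzero | Hnz];
    [now left | right].
  destruct (not_all_ex_not _ _ Hnz) as [a Ha].
  destruct (imply_to_and _ _ Ha) as [Ha0 Hfa].
  assert (Hfa_pos : 0 < f a) by (destruct (Hmaps a Ha0); congruence).
  assert (Hpos : forall b, 0 < b -> 0 < f b)
    by (intros b; now apply (f_gt0 f) with a).
  split; [| split].
  - now apply f0_eq0.
  - now apply f1_eq1.
  - now apply f_strictly_increasing.
Qed.
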